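(* Let $\psi_f(G)$ denote the minimum weight of a fractional weak hyperclique-cover of a directed hypergraph $G$. Every directed hypergraph $G$ satisfies $\beta(G)\le\psi_f(G)$.
   Context: A directed hypergraph instance consists of vertices (messages) $V=[n]$ and receivers $j=1,\dots,m$, each given by a pair $(N(j),f(j))$ with $f(j)\in[n]$ and $N(j)\subseteq[n]\setminus\{f(j)\}$; it is the index coding problem in which a server holds $x_1,\dots,x_n\in\Sigma$ ($|\Sigma|>1$) and receiver $j$ wants $x_{f(j)}$ and knows $(x_i)_{i\in N(j)}$. A solution is an encoding $\mathcal{E}:\Sigma^n\to\Sigma_P$ such that each receiver $j$ can determine $x_{f(j)}$ from $\mathcal{E}(x_1,\dots,x_n)$ and its side information for all message values; $\beta_t(G)$ is the minimum of $\lceil\log_2|\Sigma_P|\rceil$ over solutions with $|\Sigma|=2^t$, and $\beta(G)=\inf_t\beta_t(G)/t$. A weak hyperclique is a set $\mathcal{J}$ of receivers such that for every pair of distinct $i,j\in\mathcal{J}$, $f(i)\in N(j)$. A fractional weak hyperclique-cover assigns a nonnegative weight to each weak hyperclique so that for every receiver $j$ the total weight of weak hypercliques containing $j$ is at least $1$; its weight is the sum of all weights. *)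

From HB Require Import structures.
From mathcomp Require Import all_boot all_order all_algebra.
From mathcomp Require Import boolp classical_sets reals.
Set Implicit Arguments. Unset Strict Implicit. Unset Printing Implicit Defensive.
Import Order.TTheory GRing.Theory Num.Theory.

(* A directed hypergraph instance on messages 'I_n with receivers 'I_m is given
   by f : 'I_m -> 'I_n (wanted message) and N : 'I_m -> {set 'I_n} (side info),
   with f j \notin N j (stated as hypothesis in the theorem).
   Alphabet Sigma = 'I_(2^t) (any set of size 2^t), message vectors are
   {ffun 'I_n -> 'I_(2^t)}, encodings take values in a finite set 'I_k. *)

Definition is_solution (n m t k : nat) (f : 'I_m -> 'I_n) (N : 'I_m -> {set 'I_n})
  (E : {ffun 'I_n -> 'I_(2 ^ t)} -> 'I_k) : Prop :=
  forall (j : 'I_m) (x y : {ffun 'I_n -> 'I_(2 ^ t)}),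
    E x = E y -> (forall i, i \in N j -> x i = y i) -> x (f j) = y (f j).

Definition beta_t_pred (n m : nat) (f : 'I_m -> 'I_n) (N : 'I_m -> {set 'I_n})
  (t : nat) : pred nat :=
  fun e => `[< exists k (E : {ffun 'I_n -> 'I_(2 ^ t)} -> 'I_k),
                 is_solution f N E /\ up_log 2 k = e >].

Lemma beta_t_ex (n m : nat) (f : 'I_m -> 'I_n) (N : 'I_m -> {set 'I_n}) (t : nat) :
  exists e, beta_t_pred f N t e.
Proof.
exists (up_log 2 #|{ffun 'I_n -> 'I_(2 ^ t)}|).
apply/asboolP.
exists #|{ffun 'I_n -> 'I_(2 ^ t)}|, (@enum_rank _).
split=> // j x y Exy _.
by rewrite (enum_rank_inj Exy).
Qed.

Definition beta_t (n m : nat) (f : 'I_m -> 'I_n) (N : 'I_m -> {set 'I_n}) (t : nat) : nat :=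
  ex_minn (beta_t_ex f N t).

Local Open Scope ring_scope.

Definition beta (R : realType) (n m : nat) (f : 'I_m -> 'I_n) (N : 'I_m -> {set 'I_n}) : R :=
  inf [set r : R | exists2 t : nat, (0 < t)%N & r = (beta_t f N t)%:R / t%:R].

Definition weak_hyperclique (n m : nat) (f : 'I_m -> 'I_n) (N : 'I_m -> {set 'I_n})
  (J : {set 'I_m}) : bool :=
  [forall i in J, forall j in J, (i != j) ==> (f i \in N j)].

Definition frac_whc_cover (R : realType) (n m : nat) (f : 'I_m -> 'I_n)
  (N : 'I_m -> {set 'I_n}) (w : {set 'I_m} -> R) : Prop :=
  (forall J, weak_hyperclique f N J -> 0 <= w J) /\
  (forall j : 'I_m, 1 <= \sum_(J | weak_hyperclique f N J && (j \in J)) w J).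

Definition cover_weight (R : realType) (n m : nat) (f : 'I_m -> 'I_n)
  (N : 'I_m -> {set 'I_n}) (w : {set 'I_m} -> R) : R :=
  \sum_(J | weak_hyperclique f N J) w J.

Definition psi_f (R : realType) (n m : nat) (f : 'I_m -> 'I_n) (N : 'I_m -> {set 'I_n}) : R :=
  inf [set s : R | exists w : {set 'I_m} -> R,
                     frac_whc_cover f N w /\ s = cover_weight f N w].

From HB Require Import structures.
From mathcomp Require Import all_boot all_order all_algebra.
From mathcomp Require Import boolp classical_sets reals.
Set Implicit Arguments. Unset Strict Implicit. Unset Printing Implicit Defensive.
Import Order.TTheory GRing.Theory Num.Theory.

(* Given a fractional cover w and a scale t, round t * w up to integer
   multiplicities and give each copy of a weak hyperclique J one broadcast bit:
   the XOR over i in J of one bit of x_(f i).  Every receiver j lies in at least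
   t copies, one per bit of its t-bit message, and can peel its own bit off
   each XOR because it knows x_(f i) for all other i in J.  Hence
   beta_t <= t * weight(w) + #hypercliques, and dividing by t and letting t grow
   gives beta <= weight(w). *)

Lemma card_bounded_copies (I : finType) (M : nat) (a : I -> nat) (P : pred I) :
  (forall i, a i <= M) ->
  #|[set c : I * 'I_M | P c.1 && (c.2 < a c.1)]| = \sum_(i | P i) a i.
Proof.
move=> aM; rewrite -sum1_card.
rewrite (eq_bigl (fun c : I * 'I_M => P c.1 && (c.2 < a c.1))) => [|c]; last by rewrite inE.
rewrite -(pair_big_dep P (fun i (r : 'I_M) => r < a i) (fun _ _ => 1)).
by apply: eq_bigr => i _; rewrite (big_ord_narrow (aM i)) sum1_card card_ord.
Qed.

Lemma exists_inj_bits (t : nat) :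
  exists bits : 'I_(2 ^ t) -> {ffun 'I_t -> bool}, injective bits.
Proof.
have e : #|{ffun 'I_t -> bool}| = 2 ^ t by rewrite card_ffun card_bool card_ord.
exists (fun v => enum_val (cast_ord (esym e) v)).
by move=> u v /enum_val_inj /cast_ord_inj.
Qed.

Lemma big_addb_eq_in (I : finType) (A : {pred I}) (F G : I -> bool) (j : I) :
  j \in A -> (forall i, i \in A -> i != j -> F i = G i) ->
  \big[addb/false]_(i in A) F i = \big[addb/false]_(i in A) G i -> F j = G j.
Proof.
move=> jA FG; rewrite (bigD1 j jA) [RHS](bigD1 j jA) /=.
by rewrite (eq_bigr G) => [/addIb|i /andP[]]; last exact: FG.
Qed.

Lemma weak_hyperclique_side (n m : nat) (f : 'I_m -> 'I_n) (N : 'I_m -> {set 'I_n})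
  (J : {set 'I_m}) i j :
  weak_hyperclique f N J -> i \in J -> j \in J -> i != j -> f i \in N j.
Proof.
move=> /forallP /(_ i) /implyP hJ iJ jJ.
by move: (hJ iJ) => /forallP /(_ j) /implyP /(_ jJ) /implyP; apply.
Qed.

Section Solutions.
Variables (n m t : nat) (f : 'I_m -> 'I_n) (N : 'I_m -> {set 'I_n}).

Lemma beta_t_le_up_log k (E : {ffun 'I_n -> 'I_(2 ^ t)} -> 'I_k) :
  is_solution f N E -> beta_t f N t <= up_log 2 k.
Proof.
by move=> solE; rewrite /beta_t; case: ex_minnP => e _; apply; apply/asboolP; exists k, E.
Qed.

Lemma beta_t_le_bits (D : finType) (E : {ffun 'I_n -> 'I_(2 ^ t)} -> {ffun D -> bool}) :
  (forall j x y, E x = E y -> (forall i, i \in N j -> x i = y i) -> x (f j) = y (f j)) ->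
  beta_t f N t <= #|D|.
Proof.
move=> decE.
have solE : is_solution f N (enum_rank \o E).
  by move=> j x y /enum_rank_inj; apply: decE.
by have := beta_t_le_up_log solE; rewrite card_ffun card_bool up_expnK.
Qed.

End Solutions.

Section XorCode.
Variables (n m t : nat) (f : 'I_m -> 'I_n) (N : 'I_m -> {set 'I_n}).
Variables (D : finType) (clique : D -> {set 'I_m}) (slot : 'I_m -> 'I_t -> D).
Variable bits : 'I_(2 ^ t) -> {ffun 'I_t -> bool}.
Hypothesis clique_weak : forall d, weak_hyperclique f N (clique d).
Hypothesis slot_inj : forall j, injective (slot j).
Hypothesis slot_clique : forall j b, j \in clique (slot j b).
Hypothesis bits_inj : injective bits.

Definition slot_bit (j : 'I_m) (v : 'I_(2 ^ t)) (d : D) : bool :=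
  if [pick b | slot j b == d] is Some b then bits v b else false.

Definition xor_code (x : {ffun 'I_n -> 'I_(2 ^ t)}) : {ffun D -> bool} :=
  [ffun d => \big[addb/false]_(i in clique d) slot_bit i (x (f i)) d].

Lemma slot_bitE j v b : slot_bit j v (slot j b) = bits v b.
Proof.
rewrite /slot_bit; case: pickP => [b' /eqP /slot_inj -> // | /(_ b)].
by rewrite eqxx.
Qed.

Lemma xor_code_decodes j x y : xor_code x = xor_code y ->
  (forall i, i \in N j -> x i = y i) -> x (f j) = y (f j).
Proof.
move=> /ffunP Exy agree; apply: bits_inj; apply/ffunP => b.
have jJ := slot_clique j b.
rewrite -2!(slot_bitE j).
apply: (big_addb_eq_in (F := fun i => slot_bit i (x (f i)) (slot j b))
                       (G := fun i => slot_bit i (y (f i)) (slot j b)) jJ).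
  move=> i iJ ij; congr slot_bit; apply: agree.
  exact: weak_hyperclique_side (clique_weak _) iJ jJ ij.
by have := Exy (slot j b); rewrite !ffunE.
Qed.

Lemma beta_t_le_card_xor_code : beta_t f N t <= #|D|.
Proof. exact: beta_t_le_bits xor_code_decodes. Qed.

End XorCode.

Lemma beta_t_le_integer_cover (n m t : nat) (f : 'I_m -> 'I_n) (N : 'I_m -> {set 'I_n})
  (a : {set 'I_m} -> nat) :
  (forall j, t <= \sum_(J | weak_hyperclique f N J && (j \in J)) a J) ->
  beta_t f N t <= \sum_(J | weak_hyperclique f N J) a J.
Proof.
move=> cover_a.
pose M := \sum_J a J.
have aM J : a J <= M by rewrite /M (bigD1 J) //= leq_addr.
pose copy (P : pred {set 'I_m}) := [set c : {set 'I_m} * 'I_M | P c.1 && (c.2 < a c.1)].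
pose D := {c | c \in copy (weak_hyperclique f N)}.
pose around j := copy (fun J => weak_hyperclique f N J && (j \in J)).
have t_around j : t <= #|around j| by rewrite (card_bounded_copies _ aM) cover_a.
have around_copy j c : c \in around j -> c \in copy (weak_hyperclique f N).
  by rewrite !inE => /andP[/andP[-> _] ->].
pose slot_in j (b : 'I_t) := enum_val (widen_ord (t_around j) b).
have slot_around j b : slot_in j b \in around j by apply: enum_valP.
pose slot j b : D := Sub (slot_in j b) (around_copy _ _ (slot_around j b)).
have [bits bits_inj] := exists_inj_bits t.
have -> : \sum_(J | weak_hyperclique f N J) a J = #|{: D}|.
  by rewrite card_sig -(card_bounded_copies _ aM).
apply: (beta_t_le_card_xor_code (clique := fun d : D => (val d).1) (slot := slot) _ _ _ bits_inj).
- by move=> [c /= cD]; move: cD; rewrite inE => /andP[].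
- by move=> j b b' /(congr1 val); rewrite !SubK /slot_in => /enum_val_inj /(congr1 val) /= /val_inj.
- by move=> j b; move: (slot_around j b); rewrite inE => /andP[/andP[]].
Qed.

Local Open Scope ring_scope.

Section Fractional.
Variables (R : realType) (n m : nat) (f : 'I_m -> 'I_n) (N : 'I_m -> {set 'I_n}).

Lemma beta_le_beta_t_div t : (0 < t)%N -> beta R f N <= (beta_t f N t)%:R / t%:R.
Proof.
move=> t_gt0; apply: ge_inf; last by exists t.
by exists 0 => _ [t' _ ->]; rewrite divr_ge0 ?ler0n.
Qed.

Definition singleton_cover : {set 'I_m} -> R := fun J => (#|J| == 1)%N%:R.

Lemma frac_whc_cover_singletons : frac_whc_cover f N singleton_cover.
Proof.
split=> [J _|j]; first by rewrite ler0n.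
have j_clique : weak_hyperclique f N [set j] && (j \in [set j]).
  rewrite set11 andbT; apply/forallP => i; apply/implyP => /set1P ->.
  by apply/forallP => k; apply/implyP => /set1P ->; rewrite eqxx.
rewrite (bigD1 [set j] j_clique) /= /singleton_cover cards1 eqxx lerDl.
by apply: sumr_ge0 => J _; rewrite ler0n.
Qed.

Lemma beta_le_cover_weight_add w t : frac_whc_cover f N w -> (0 < t)%N ->
  beta R f N <=
    cover_weight f N w + (\sum_(J | weak_hyperclique f N J) 1)%N%:R / t%:R.
Proof.
move=> [w_ge0 w_cover] t_gt0.
have t_pos : (0 : R) < t%:R by rewrite ltr0n.
pose a J := (Num.truncn (t%:R * w J)).+1.
have a_cover j : (t <= \sum_(J | weak_hyperclique f N J && (j \in J)) a J)%N.
  rewrite -(ler_nat R) natr_sum.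
  apply: le_trans (ler_sum _ (fun J _ => ltW (truncnS_gt (t%:R * w J)))).
  by rewrite -mulr_sumr ler_peMr ?ler0n.
have a_le J : weak_hyperclique f N J -> (a J)%:R <= t%:R * w J + 1 :> R.
  by move=> hJ; rewrite /a -addn1 natrD lerD2r truncn_le mulr_ge0 ?ler0n ?w_ge0.
apply: le_trans (beta_le_beta_t_div t_gt0) _.
rewrite ler_pdivrMr // mulrDl divfK ?gt_eqF // mulrC mulr_sumr /cover_weight.
apply: le_trans (_ : (\sum_(J | weak_hyperclique f N J) a J)%N%:R <= _).
  by rewrite ler_nat; apply: beta_t_le_integer_cover.
by rewrite !natr_sum -big_split /=; apply: ler_sum.
Qed.

Lemma beta_le_cover_weight w : frac_whc_cover f N w -> beta R f N <= cover_weight f N w.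
Proof.
move=> w_cover; apply/ler_addgt0Pr => e e_gt0.
pose K := (\sum_(J | weak_hyperclique f N J) 1)%N.
pose t := (Num.truncn (K%:R / e)).+1.
apply: le_trans (beta_le_cover_weight_add w_cover (ltn0Sn _ : (0 < t)%N)) _.
rewrite lerD2l ler_pdivrMr ?ltr0n // mulrC -ler_pdivrMr //.
exact: ltW (truncnS_gt _).
Qed.

End Fractional.

Theorem lemma3p3 (R : realType) (n m : nat) (f : 'I_m -> 'I_n) (N : 'I_m -> {set 'I_n})
  (hfN : forall j : 'I_m, f j \notin N j) :
  beta R f N <= psi_f R f N.
Proof.
apply: lb_le_inf => [|_ [w [w_cover ->]]]; last exact: beta_le_cover_weight.
exists (cover_weight f N (@singleton_cover R m)), (@singleton_cover R m).
by split; [apply: frac_whc_cover_singletons |].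
Qed.
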